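(* Let $(A,[\cdot,\cdot])$ be a Malcev algebra, $\rho:A\to\mathrm{End}(V)$ a representation of $A$, $\widehat{A}=A\ltimes_{\rho^*}V^*$, and $T:V\to A$ a linear map. The following are equivalent: (i) $T$ is an $\mathcal{O}$-operator of $A$ associated to $\rho$; (ii) $T-\sigma(T)$ is a skew-symmetric solution of the Malcev Yang-Baxter equation in $\widehat{A}$; (iii) $T-\sigma(T)$, regarded as a linear map $\widehat{A}^*\to\widehat{A}$, is an $\mathcal{O}$-operator of the Malcev algebra $\widehat{A}$ associated to the representation $\mathrm{ad}^*$ of $\widehat{A}$ on $\widehat{A}^*$.
   Context: Field $\mathbb{K}$ of characteristic zero, finite-dimensional spaces. A Malcev algebra is a vector space with an anti-symmetric bracket satisfying $J(x,y,[x,z])=[J(x,y,z),x]$, $J(x,y,z)=[[x,y],z]+[[z,x],y]+[[y,z],x]$. A representation of $A$ on $V$ is a linear map $\rho:A\to\mathrm{End}(V)$ with $\rho([[x,y],z])=\rho(x)\rho(y)\rho(z)-\rho(z)\rho(x)\rho(y)+\rho(y)\rho([z,x])-\rho([y,z])\rho(x)$. Its dual $\rho^*$ is given by $\langle\rho^*(x)a^*,b\rangle=-\langle a^*,\rho(x)b\rangle$. $\widehat{A}=A\ltimes_{\rho^*}V^*$ is $A\oplus V^*$ with bracket $[x+a^*,y+b^*]=[x,y]+\rho^*(x)b^*-\rho^*(y)a^*$. The adjoint representation is $\mathrm{ad}(x)y=[x,y]$, and $\mathrm{ad}^*$ is its dual. An $\mathcal{O}$-operator associated to a representation $(W,\pi)$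 of a Malcev algebra $L$ is a linear map $S:W\to L$ with $[S(a),S(b)]=S(\pi(S(a))b-\pi(S(b))a)$. $T$ is identified with $\sum_i T(v_i)\otimes v_i^*\in\widehat{A}\otimes\widehat{A}$ ($\{v_i\}$ a basis of $V$, $\{v_i^*\}$ the dual basis), $\sigma(a\otimes b)=b\otimes a$, and an element $r\in\widehat{A}\otimes\widehat{A}$ is regarded as a map $\widehat{A}^*\to\widehat{A}$ via $\langle a^*,r(b^* )\rangle=\langle a^*\otimes b^*,r\rangle$. For $r=\sum_i x_i\otimes y_i$, $r$ solves the Malcev Yang-Baxter equation if $\sum_{i,j}[x_i,x_j]\otimes y_i\otimes y_j+\sum_{i,j}x_i\otimes[y_i,x_j]\otimes y_j+\sum_{i,j}x_i\otimes x_j\otimes[y_i,y_j]=0$. *)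

(* Finite-dimensional spaces are modelled in coordinates:
   A = K^n, V = K^m (row vectors), V^* = K^m with the standard pairing,
   so that the dual basis of the standard basis is the standard basis. *)
From HB Require Import structures.
From mathcomp Require Import all_boot all_order all_algebra.
Set Implicit Arguments. Unset Strict Implicit. Unset Printing Implicit Defensive.
Import Order.TTheory GRing.Theory Num.Theory.
Local Open Scope ring_scope.

Section Defs.
Variable K : fieldType.

Definition ev (p : nat) (i : 'I_p) : 'rV[K]_p := delta_mx 0 i.

Definition pair (p : nat) (f u : 'rV[K]_p) : K := \sum_(i < p) f 0 i * u 0 i.

Definition jacobiator (p : nat) (br : 'rV[K]_p -> 'rV[K]_p -> 'rV[K]_p)
  (x y z : 'rV[K]_p) : 'rV[K]_p :=
  br (br x y) z + br (br z x) y + br (br y z) x.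

Definition is_malcev (p : nat) (br : 'rV[K]_p -> 'rV[K]_p -> 'rV[K]_p) : Prop :=
  [/\ (forall x, linear (br x)), (forall y, linear (br^~ y)),
      (forall x y, br x y = - br y x) &
      (forall x y z, jacobiator br x y (br x z) = br (jacobiator br x y z) x)].

Definition is_malcev_rep (p q : nat) (br : 'rV[K]_p -> 'rV[K]_p -> 'rV[K]_p)
  (rho : 'rV[K]_p -> 'rV[K]_q -> 'rV[K]_q) : Prop :=
  [/\ (forall x, linear (rho x)),
      (forall (a : K) x y v, rho (a *: x + y) v = a *: rho x v + rho y v) &
      (forall x y z v,
        rho (br (br x y) z) v =
          rho x (rho y (rho z v)) - rho z (rho x (rho y v))
          + rho y (rho (br z x) v) - rho (br y z) (rho x v))].

(* dual representation: <rho^*(x) f, b> = - <f, rho(x) b>  (pairing with standard basis) *)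
Definition dualrep (p q : nat) (rho : 'rV[K]_p -> 'rV[K]_q -> 'rV[K]_q)
  (x : 'rV[K]_p) (f : 'rV[K]_q) : 'rV[K]_q :=
  \row_(i < q) - pair f (rho x (ev i)).

Definition adj (p : nat) (br : 'rV[K]_p -> 'rV[K]_p -> 'rV[K]_p) := br.

Definition O_operator (p q : nat) (brL : 'rV[K]_p -> 'rV[K]_p -> 'rV[K]_p)
  (pi : 'rV[K]_p -> 'rV[K]_q -> 'rV[K]_q) (S : 'rV[K]_q -> 'rV[K]_p) : Prop :=
  forall a b, brL (S a) (S b) = S (pi (S a) b - pi (S b) a).

(* semidirect product A ⋉_{rho^*} V^*, with x + a^* encoded as row_mx x a^* *)
Definition inA (n m : nat) (x : 'rV[K]_n) : 'rV[K]_(n + m) := row_mx x 0.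
Definition inVs (n m : nat) (a : 'rV[K]_m) : 'rV[K]_(n + m) := row_mx 0 a.

Definition hatbr (n m : nat) (br : 'rV[K]_n -> 'rV[K]_n -> 'rV[K]_n)
  (rho : 'rV[K]_n -> 'rV[K]_m -> 'rV[K]_m) (u w : 'rV[K]_(n + m)) : 'rV[K]_(n + m) :=
  row_mx (br (lsubmx u) (lsubmx w))
         (dualrep rho (lsubmx u) (rsubmx w) - dualrep rho (lsubmx w) (rsubmx u)).

(* tensors: x ⊗ y in K^N ⊗ K^N is the matrix with entries x_i y_j *)
Definition tensor2 (N : nat) (x y : 'rV[K]_N) : 'M[K]_N := trmx x *m y.

Definition sigma (N : nat) (r : 'M[K]_N) : 'M[K]_N := trmx r.

(* T identified with sum_i T(v_i) ⊗ v_i^* in Â ⊗ Â *)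
Definition op_tensor (n m : nat) (T : 'rV[K]_m -> 'rV[K]_n) : 'M[K]_(n + m) :=
  \sum_(i < m) tensor2 (inA m (T (ev i))) (inVs n (ev i)).

(* r regarded as a map from the dual of A-hat to A-hat, via <f, r(g)> = <f (x) g, r> *)
Definition tensor_map (N : nat) (r : 'M[K]_N) (b : 'rV[K]_N) : 'rV[K]_N :=
  b *m trmx r.

Definition skew_symmetric (N : nat) (r : 'M[K]_N) : Prop := sigma r = - r.

(* Malcev Yang-Baxter equation, for r written as r = sum_a x_a ⊗ y_a with
   x_a = e_a and y_a = (row a of r); a 3-tensor is zero iff all its
   coordinates (i, j, k) vanish. *)
Definition MYBE (N : nat) (br : 'rV[K]_N -> 'rV[K]_N -> 'rV[K]_N) (r : 'M[K]_N)
  : Prop :=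
  forall i j k : 'I_N,
    \sum_(a < N) \sum_(b < N)
      (  (br (ev a) (ev b)) 0 i * (row a r) 0 j * (row b r) 0 k
       + (ev a) 0 i * (br (row a r) (ev b)) 0 j * (row b r) 0 k
       + (ev a) 0 i * (ev b) 0 j * (br (row a r) (row b r)) 0 k) = 0.

End Defs.

From HB Require Import structures.
From mathcomp Require Import all_boot all_order all_algebra ring.
Import GRing.Theory.
Set Implicit Arguments. Unset Strict Implicit. Unset Printing Implicit Defensive.
Local Open Scope ring_scope.

(* Let R be r = T - sigma(T) viewed as a map from the dual of A-hat to A-hat,
   so that R (x + a) = T a - T^* x, and let C(f, g, h) be the cyclic sum of
   <f, [R g, R h]>.  Since r is skew-symmetric and the bracket of A-hat is
   antisymmetric:
   - the (i, j, k) coordinate of the Malcev Yang-Baxter tensor of r is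
     C(e_i, e_j, e_k);
   - <h, [R f, R g] - R (ad^*(R f) g - ad^*(R g) f)> = C(f, g, h);
   - C(x + a, y + b, z + c) is the cyclic sum of
     <z, [T a, T b] - T (rho(T a) b - rho(T b) a)>.
   Hence each of (i), (ii), (iii) says that the trilinear form C vanishes. *)

Section Pairing.
Variables (K : fieldType) (p : nat).
Implicit Types (f u : 'rV[K]_p).

Lemma pairC f u : pair f u = pair u f.
Proof. by apply: eq_bigr => i _; rewrite mulrC. Qed.

Lemma pair_is_bilinear : bilinear_for
  (GRing.Scale.Law.clone _ _ *%R _) (GRing.Scale.Law.clone _ _ *%R _) (@pair K p).
Proof.
by split=> [u|f] a v w /=; rewrite /pair mulr_sumr -big_split;
  apply: eq_bigr => i _ /=; rewrite !mxE; ring.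
Qed.

HB.instance Definition _ := bilinear_isBilinear.Build K 'rV[K]_p 'rV[K]_p K _ _
  (@pair K p) pair_is_bilinear.

Lemma pair_evl (j : 'I_p) u : pair (ev K j) u = u 0 j.
Proof.
rewrite /pair (bigD1 j) //= big1 ?addr0 => [|i /negPf ne_ij];
  by rewrite /ev mxE ?eqxx ?ne_ij ?mul1r ?mul0r.
Qed.

Lemma pair_evr (j : 'I_p) u : pair u (ev K j) = u 0 j.
Proof. by rewrite pairC pair_evl. Qed.

Lemma sum_ev_mull (i : 'I_p) (F : 'I_p -> K) : \sum_a (ev K a) 0 i * F a = F i.
Proof.
rewrite (bigD1 i) //= big1 ?addr0 => [|a /negPf ne_ai];
  by rewrite /ev mxE ?eqxx ?(eq_sym i) ?ne_ai ?mul1r ?mul0r.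
Qed.

Lemma pair_row_mx q (x y : 'rV[K]_p) (a b : 'rV[K]_q) :
  pair (row_mx x a) (row_mx y b) = pair x y + pair a b.
Proof.
by rewrite /pair big_split_ord; congr (_ + _); apply: eq_bigr => i _;
  rewrite ?row_mxEl ?row_mxEr.
Qed.

Lemma pair_mulmx (h g : 'rV[K]_p) (M : 'M[K]_p) :
  pair h (g *m M) = pair g (h *m M^T).
Proof.
rewrite /pair; under eq_bigr do rewrite mxE mulr_sumr.
under [RHS]eq_bigr do rewrite mxE mulr_sumr.
by rewrite exchange_big; apply: eq_bigr => k _; apply: eq_bigr => l _;
  rewrite mxE; ring.
Qed.

Lemma bilinear_eq0_on_basis (V : lmodType K)
    (F : {bilinear 'rV[K]_p -> 'rV[K]_p -> V}) :
  (forall i j, F (ev K i) (ev K j) = 0) -> forall u v, F u v = 0.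
Proof.
move=> F0 u v; rewrite (row_sum_delta u) linear_sumlz big1 // => i _.
rewrite linearZl_LR (row_sum_delta v) linear_sumr big1 ?scaler0 // => j _.
by rewrite linearZr_LR /= F0 scaler0.
Qed.

End Pairing.

Section DualMap.
Variables (K : fieldType) (p q : nat).

Definition dual_map (T : 'rV[K]_q -> 'rV[K]_p) (x : 'rV[K]_p) : 'rV[K]_q :=
  \row_i pair x (T (ev K i)).

Lemma pair_dual_map (T : {linear 'rV[K]_q -> 'rV[K]_p}) x w :
  pair (dual_map T x) w = pair x (T w).
Proof.
rewrite [in RHS](row_sum_delta w) linear_sum linear_sumr.
by apply: eq_bigr => i _; rewrite linearZ linearZr_LR /= mxE mulrC.
Qed.

End DualMap.

Section DualRep.
Variables (K : fieldType) (p q : nat).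

Lemma dualrepE (rho : 'rV[K]_p -> 'rV[K]_q -> 'rV[K]_q) x f :
  dualrep rho x f = - dual_map (rho x) f.
Proof. by apply/rowP => i; rewrite !mxE. Qed.

Variable rho : {bilinear 'rV[K]_p -> 'rV[K]_q -> 'rV[K]_q}.

Lemma pair_dualrep x f w : pair (dualrep rho x f) w = - pair f (rho x w).
Proof. by rewrite dualrepE linearNl /= pair_dual_map. Qed.

Lemma dualrep_is_bilinear : bilinear_for
  (GRing.Scale.Law.clone _ _ *:%R _) (GRing.Scale.Law.clone _ _ *:%R _)
  (dualrep rho).
Proof.
by split=> [f|x] a u v; apply/rowP => i; rewrite !mxE /= ?linearPl ?linearPr /=;
  ring.
Qed.

HB.instance Definition _ := bilinear_isBilinear.Build K 'rV[K]_p 'rV[K]_q 'rV[K]_q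
  _ _ (dualrep rho) dualrep_is_bilinear.

End DualRep.

Lemma scale_addrBA (R : ringType) (V : lmodType R) (c : R) (x y z w : V) :
  c *: x + y - (c *: z + w) = c *: (x - z) + (y - w).
Proof. by rewrite scalerBr opprD addrACA. Qed.

Section ODefect.
Variables (K : fieldType) (p q : nat).

Definition O_defect (brL : 'rV[K]_p -> 'rV[K]_p -> 'rV[K]_p)
    (pi : 'rV[K]_p -> 'rV[K]_q -> 'rV[K]_q) (S : 'rV[K]_q -> 'rV[K]_p) a b :=
  brL (S a) (S b) - S (pi (S a) b - pi (S b) a).

Lemma O_operatorP brL pi S :
  O_operator brL pi S <-> forall a b, O_defect brL pi S a b = 0.
Proof.
split=> O0 a b; first by rewrite /O_defect O0 subrr.
by apply/eqP; rewrite -subr_eq0; apply/eqP; exact: O0.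
Qed.

Variables (brL : {bilinear 'rV[K]_p -> 'rV[K]_p -> 'rV[K]_p})
  (pi : {bilinear 'rV[K]_p -> 'rV[K]_q -> 'rV[K]_q})
  (S : {linear 'rV[K]_q -> 'rV[K]_p}).

Lemma O_defect_is_bilinear : bilinear_for
  (GRing.Scale.Law.clone _ _ *:%R _) (GRing.Scale.Law.clone _ _ *:%R _)
  (O_defect brL pi S).
Proof.
by split=> [b|a] c u v; rewrite /O_defect /= !linearP /= ?linearPl ?linearPr /=
  ?scalerN -?opprD scale_addrBA linearP scale_addrBA.
Qed.

HB.instance Definition _ := bilinear_isBilinear.Build K 'rV[K]_q 'rV[K]_q 'rV[K]_p
  _ _ (O_defect brL pi S) O_defect_is_bilinear.

Lemma pair_O_defect z a b : pair z (O_defect brL pi S a b)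
  = pair z (brL (S a) (S b)) - pair z (S (pi (S a) b)) + pair z (S (pi (S b) a)).
Proof. by rewrite /O_defect linearBr /= linearB linearBr /= opprD opprK addrA. Qed.

End ODefect.

Section Tensor2.
Variables (K : fieldType) (N : nat).

Lemma mulmx_tensor2 (b u w : 'rV[K]_N) : b *m tensor2 u w = pair b u *: w.
Proof.
rewrite /tensor2 mulmxA [b *m _]mx11_scalar mul_scalar_mx.
by congr (_ *: _); rewrite mxE; apply: eq_bigr => i _; rewrite mxE.
Qed.

Lemma mulmx_tensor2_tr (b u w : 'rV[K]_N) : b *m (tensor2 u w)^T = pair b w *: u.
Proof. by rewrite /tensor2 trmx_mul trmxK -[w^T *m u]/(tensor2 w u) mulmx_tensor2. Qed.

End Tensor2.

Section TensorMap.
Variables (K : fieldType) (N : nat) (r : 'M[K]_N).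

Lemma tensor_map_is_linear : linear (tensor_map r).
Proof. by move=> a u v; rewrite /tensor_map mulmxDl scalemxAl. Qed.

HB.instance Definition _ := GRing.isLinear.Build K 'rV[K]_N 'rV[K]_N _
  (tensor_map r) tensor_map_is_linear.

Lemma tensor_map_ev j : tensor_map r (ev K j) = \sum_a r a j *: ev K a.
Proof.
rewrite /tensor_map /ev -rowE [LHS]row_sum_delta.
by apply: eq_bigr => a _; rewrite !mxE.
Qed.

Definition cyclic_form (B : 'rV[K]_N -> 'rV[K]_N -> 'rV[K]_N) f g h :=
  let R := tensor_map r in
  pair f (B (R g) (R h)) + pair g (B (R h) (R f)) + pair h (B (R f) (R g)).

End TensorMap.

Section SkewSolutions.
Variables (K : fieldType) (N : nat).
Variables (B : {bilinear 'rV[K]_N -> 'rV[K]_N -> 'rV[K]_N}) (r : 'M[K]_N).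
Hypotheses (B_anti : forall x y, B x y = - B y x) (r_skew : r^T = - r).
Local Notation R := (tensor_map r).

Lemma pair_tensor_map_skew g h : pair h (R g) = - pair g (R h).
Proof. by rewrite /tensor_map pair_mulmx trmxK r_skew mulmxN linearNr /= opprK. Qed.

Lemma row_skew a : row a r = - R (ev K a).
Proof. by rewrite /tensor_map r_skew mulmxN /ev -rowE opprK. Qed.

Lemma pair_O_defect_tensor_map f g h :
  pair h (O_defect B (dualrep (adj B)) R f g) = cyclic_form r B f g h.
Proof.
rewrite /O_defect /adj linearBr /= pair_tensor_map_skew linearBl /= !pair_dualrep.
by rewrite /cyclic_form (B_anti (R f) (R h)) linearNr /=; ring.
Qed.

Lemma O_operator_tensor_mapP :
  O_operator B (dualrep (adj B)) R <-> forall f g h, cyclic_form r B f g h = 0.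
Proof.
rewrite O_operatorP; split=> [D0 f g h | C0 f g].
  by rewrite -pair_O_defect_tensor_map D0 linear0r.
by apply/rowP => k; rewrite -pair_evl pair_O_defect_tensor_map C0 mxE.
Qed.

Lemma cyclic_form_eq0_on_basis :
  (forall i j k, cyclic_form r B (ev K i) (ev K j) (ev K k) = 0) ->
  forall f g h, cyclic_form r B f g h = 0.
Proof.
move=> C0 f g h; rewrite -pair_O_defect_tensor_map bilinear_eq0_on_basis ?linear0r //.
move=> i j; apply/rowP => k.
by rewrite -pair_evl pair_O_defect_tensor_map C0 mxE.
Qed.

Lemma MYBE_cyclic_formP :
  MYBE B r <-> forall i j k, cyclic_form r B (ev K i) (ev K j) (ev K k) = 0.
Proof.
suff coordE i j k : \sum_(a < N) \sum_(b < N)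
      (  (B (ev K a) (ev K b)) 0 i * (row a r) 0 j * (row b r) 0 k
       + (ev K a) 0 i * (B (row a r) (ev K b)) 0 j * (row b r) 0 k
       + (ev K a) 0 i * (ev K b) 0 j * (B (row a r) (row b r)) 0 k)
    = cyclic_form r B (ev K i) (ev K j) (ev K k).
  by split=> C0 i j k; [rewrite -coordE | rewrite coordE]; apply: C0.
under eq_bigr do rewrite !big_split /=.
rewrite !big_split /= /cyclic_form !pair_evl; congr (_ + _ + _).
- rewrite !tensor_map_ev linear_sumlz summxE; apply: eq_bigr => a _.
  rewrite linearZl_LR linear_sumr /= [RHS]mxE summxE mulr_sumr.
  by apply: eq_bigr => b _; rewrite linearZ !mxE; ring.
- under eq_bigr do under eq_bigr do rewrite -mulrA.
  under eq_bigr do rewrite -mulr_sumr.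
  rewrite sum_ev_mull B_anti -linearNl /= -row_skew tensor_map_ev linear_sumr summxE.
  by apply: eq_bigr => b _; rewrite linearZ !mxE mulrC.
- under eq_bigr do under eq_bigr do rewrite -mulrA.
  under eq_bigr do rewrite -mulr_sumr sum_ev_mull.
  by rewrite sum_ev_mull !row_skew linearNl linearNr /= opprK.
Qed.

End SkewSolutions.

Section Semidirect.
Variables (K : fieldType) (n m : nat).
Variables (br : {bilinear 'rV[K]_n -> 'rV[K]_n -> 'rV[K]_n})
  (rho : {bilinear 'rV[K]_n -> 'rV[K]_m -> 'rV[K]_m}).

Lemma hatbr_is_bilinear : bilinear_for
  (GRing.Scale.Law.clone _ _ *:%R _) (GRing.Scale.Law.clone _ _ *:%R _)
  (hatbr br rho).
Proof.
by split=> [w|u] c x y; rewrite /hatbr !linearP /= ?linearPl ?linearPr /=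
  scale_row_mx add_row_mx scale_addrBA.
Qed.

HB.instance Definition _ := bilinear_isBilinear.Build K
  'rV[K]_(n + m) 'rV[K]_(n + m) 'rV[K]_(n + m) _ _ (hatbr br rho) hatbr_is_bilinear.

Hypothesis br_anti : forall x y, br x y = - br y x.

Lemma hatbr_anti u w : hatbr br rho u w = - hatbr br rho w u.
Proof. by rewrite /hatbr opp_row_mx opprB -br_anti. Qed.

Lemma inA_is_linear : linear (@inA K n m).
Proof. by move=> c u v; rewrite /inA scale_row_mx add_row_mx scaler0 addr0. Qed.

HB.instance Definition _ := GRing.isLinear.Build K 'rV[K]_n 'rV[K]_(n + m) _
  (@inA K n m) inA_is_linear.

Lemma inVs_is_linear : linear (@inVs K n m).
Proof. by move=> c u v; rewrite /inVs scale_row_mx add_row_mx scaler0 addr0. Qed.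

HB.instance Definition _ := GRing.isLinear.Build K 'rV[K]_m 'rV[K]_(n + m) _
  (@inVs K n m) inVs_is_linear.

Variable T : {linear 'rV[K]_m -> 'rV[K]_n}.
Local Notation rT := (op_tensor T - sigma (op_tensor T)).

Lemma tensor_map_op_tensor x a :
  tensor_map rT (row_mx x a) = row_mx (T a) (- dual_map T x).
Proof.
have -> : row_mx (T a) (- dual_map T x) = inA m (T a) - inVs n (dual_map T x).
  by rewrite /inA /inVs opp_row_mx add_row_mx oppr0 addr0 add0r.
rewrite /tensor_map /sigma linearB /= trmxK mulmxBr /op_tensor linear_sum /=.
rewrite !mulmx_sumr; congr (_ - _).
- under eq_bigr do rewrite mulmx_tensor2_tr /inVs pair_row_mx linear0r add0r pair_evr.
  rewrite [in RHS](row_sum_delta a) !linear_sum.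
  by apply: eq_bigr => i _; rewrite !linearZ.
- under eq_bigr do rewrite mulmx_tensor2 /inA pair_row_mx linear0r addr0.
  rewrite [in RHS](row_sum_delta (dual_map T x)) linear_sum.
  by apply: eq_bigr => i _; rewrite linearZ mxE.
Qed.

Lemma cyclic_form_op_tensor x a y b z c :
  cyclic_form rT (hatbr br rho) (row_mx x a) (row_mx y b) (row_mx z c)
  = pair z (O_defect br rho T a b) + pair x (O_defect br rho T b c)
    + pair y (O_defect br rho T c a).
Proof.
rewrite /cyclic_form !tensor_map_op_tensor /hatbr !row_mxKl !row_mxKr !pair_row_mx.
rewrite [pair a _]linearBr [pair b _]linearBr [pair c _]linearBr /=.
rewrite !(pairC a) !(pairC b) !(pairC c) !pair_dualrep !linearNl /= !pair_dual_map.
by rewrite !pair_O_defect; ring.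
Qed.

Lemma O_operator_cyclic_formP :
  O_operator br rho T <-> forall f g h, cyclic_form rT (hatbr br rho) f g h = 0.
Proof.
rewrite O_operatorP; split=> [D0 f g h | C0 a b].
  rewrite -(hsubmxK f) -(hsubmxK g) -(hsubmxK h) cyclic_form_op_tensor.
  by rewrite !D0 !linear0r !addr0.
apply/rowP => k; have := C0 (row_mx 0 a) (row_mx 0 b) (row_mx (ev K k) 0).
rewrite cyclic_form_op_tensor ![pair 0 _]linear0l /= !addr0 pair_evl => ->.
by rewrite mxE.
Qed.

Lemma malcev_O_operator_tfae :
  let r := op_tensor T - sigma (op_tensor T) in
  [<-> O_operator br rho T;
       skew_symmetric r /\ MYBE (hatbr br rho) r;
       O_operator (hatbr br rho) (dualrep (adj (hatbr br rho))) (tensor_map r)].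
Proof.
move=> r; have r_skew : r^T = - r by rewrite /r /sigma linearB /= trmxK opprB.
tfae.
- move/O_operator_cyclic_formP => C0; split; first exact: r_skew.
  by apply/(MYBE_cyclic_formP hatbr_anti r_skew) => i j k; apply: C0.
- case=> _ /(MYBE_cyclic_formP hatbr_anti r_skew) C0.
  apply/(O_operator_tensor_mapP hatbr_anti r_skew).
  exact: (cyclic_form_eq0_on_basis hatbr_anti r_skew).
- by move/(O_operator_tensor_mapP hatbr_anti r_skew)/O_operator_cyclic_formP.
Qed.

End Semidirect.

Unset Implicit Arguments. Set Strict Implicit.

Theorem corollary2p11 (K : fieldType) (n m : nat)
  (charK : [pchar K] =i pred0)
  (br : 'rV[K]_n -> 'rV[K]_n -> 'rV[K]_n)
  (rho : 'rV[K]_n -> 'rV[K]_m -> 'rV[K]_m)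
  (T : 'rV[K]_m -> 'rV[K]_n) :
  is_malcev br -> is_malcev_rep br rho -> linear T ->
  let r := op_tensor T - sigma (op_tensor T) in
  [<-> O_operator br rho T;
       skew_symmetric r /\ MYBE (hatbr br rho) r;
       O_operator (hatbr br rho) (dualrep (adj (hatbr br rho))) (tensor_map r)].
Proof.
case=> br_linr br_linl br_anti _ [rho_linr rho_linl _] T_lin.
pose brB : {bilinear 'rV[K]_n -> 'rV[K]_n -> 'rV[K]_n} :=
  HB.pack br (bilinear_isBilinear.Build _ _ _ _ _ _ br (br_linl, br_linr)).
pose rhoB : {bilinear 'rV[K]_n -> 'rV[K]_m -> 'rV[K]_m} :=
  HB.pack rho (bilinear_isBilinear.Build _ _ _ _ _ _ rho
    (fun v a x y => rho_linl a x y v, rho_linr)).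
pose TL : {linear 'rV[K]_m -> 'rV[K]_n} :=
  HB.pack T (GRing.isLinear.Build _ _ _ _ T T_lin).
exact: (@malcev_O_operator_tfae K n m brB rhoB br_anti TL).
Qed.
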